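(* Assume the Setting and Constants below and that $(L_g,L_c)$ satisfies $(S_n)$. Let $k_c,\tilde k_c\in C^n_b(X_c,X_c)$ both satisfy $h(0)=0$, $Dh(0)=0$, $\|Dh\|_0\le L_c$. Let $K=\iota+(k_c,k_u,k_s)$ and $\tilde K=\iota+(\tilde k_c,\tilde k_u,\tilde k_s)$ be the (unique) conjugacies associated with $k_c$ and $\tilde k_c$ respectively, i.e. $(r,k_u,k_s)$ (resp. $(\tilde r,\tilde k_u,\tilde k_s)$) is the unique triple with $k_u\in C^0_b(X_c,X_u)$, $k_s\in C^0_b(X_c,X_s)$, $r\in C^0_b(X_c,X_c)$, $A_c+r$ a homeomorphism, and $F\circ K=K\circ(A_c+r)$ (resp. the same with tildes). Then $K(X_c)=\tilde K(X_c)$.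
   Context: Notation. $C^k_b(Y,Z)$ is the Banach space of $C^k$ maps $f:Y\to Z$ with $\|f\|_k:=\max_{0\le j\le k}\sup_y\|D^jf(y)\|<\infty$. $\iota:X_c\to X$ is the inclusion, and $\iota+(k_c,k_u,k_s)$ denotes $x\mapsto(x+k_c(x))+k_u(x)+k_s(x)$. Setting. Let $n\ge2$ be an integer and $X$ a Banach space with $X=X_c\oplus X_u\oplus X_s$ for closed subspaces, whose norm satisfies $\|x\|=\max\{\|x_c\|,\|x_u\|,\|x_s\|\}$. Let $A$ be a bounded linear operator on $X$ leaving $X_c,X_u,X_s$ invariant, with restrictions $A_c,A_u,A_s$; $A_c,A_u$ invertible, and $\|A_c^{-1}\|^{\tilde n}\|A_s\|<1$, $\|A_u^{-1}\|\|A_c\|^{\tilde n}<1$ for $1\le\tilde n\le n$. Let $L_g,L_c\ge0$, $F=A+g$ with $g\in C^n_b(X,X)$, $g(0)=0$, $Dg(0)=0$, $\|Dg\|_0\le L_g$. Constants. $L_r:=\frac{L_g+L_c(2\|A_c\|+L_g)}{1-L_c}$, $L_t:=\frac{\|A_c^{-1}\|^2L_r}{1-\|A_c^{-1}\|L_r}$, $L_u:=\frac{\|A_u^{-1}\|(1+L_c)L_g}{1-L_r\|A_u^{-1}\|-\|A_c\|\|A_u^{-1}\|}$, $L_s:=\frac{\|A_c^{-1}\|(1+L_c)L_g}{1-L_r\|A_c^{-1}\|-\|A_s\|\|A_c^{-1}\|}$, $L_{-1}:=\|A_c^{-1}\|+L_t$; $\theta_{\tilde n,1}:=L_g+L_c$,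 $\theta_{\tilde n,2}:=\|A_u^{-1}\|((\|A_c\|+L_r)^{\tilde n}+L_g+L_u)$, $\theta_{\tilde n,3}:=L_{-1}^{\tilde n}(\|A_s\|(1+L_{-1}L_s)+L_g(1+L_{-1}(1+L_c)))$. $(S_N)$ means: $L_c<1$, $L_r\|A_c^{-1}\|<1$, $L_r\|A_u^{-1}\|+\|A_c\|\|A_u^{-1}\|<1$, $L_r\|A_c^{-1}\|+\|A_s\|\|A_c^{-1}\|<1$, and $\theta_{\tilde n,i}<1$ for $i=1,2,3$, $0\le\tilde n\le N$. *)

From HB Require Import structures.
From mathcomp Require Import all_boot all_order all_algebra.
From mathcomp Require Import all_classical all_reals all_analysis.
Set Implicit Arguments.
Unset Strict Implicit.
Unset Printing Implicit Defensive.
Import Order.TTheory GRing.Theory Num.Theory.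
Import numFieldNormedType.Exports.
Local Open Scope ring_scope.
Local Open Scope classical_set_scope.

Definition opnorm (R : realType) (V W : normedModType R) (f : V -> W) : R :=
  sup [set `|f x| | x in [set x : V | `|x| <= 1]].

(* Iterated Frechet derivative evaluated on directions:
   Dit j f y hs = D^j f(y)[hs 0, ..., hs (j-1)],
   with D^(j+1) f(y)[h_0..h_j] = D (y' |-> D^j f(y')[h_0..h_(j-1)]) (y) [h_j]. *)
Fixpoint Dit (R : realType) (V W : normedModType R) (j : nat) (f : V -> W)
  : V -> (nat -> V) -> W :=
  match j with
  | 0 => fun y _ => f y
  | j'.+1 => fun y hs => 'd (fun y' => Dit j' f y' hs) y (hs j')
  end.

Definition unit_dirs (R : realType) (V : normedModType R) (j : nat)
  (hs : nat -> V) : Prop := forall i, (i < j)%N -> `|hs i| <= 1.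

(* f \in C^k_b(V, W): k times continuously (Frechet) differentiable, each
   D^j f (j <= k) continuous in operator norm and sup_y ||D^j f(y)|| < oo. *)
Definition Cnb (R : realType) (V W : normedModType R) (k : nat) (f : V -> W)
  : Prop :=
  [/\ (forall j, (j < k)%N -> forall (hs : nat -> V) (y : V),
          differentiable (fun y' => Dit j f y' hs) y),
      (forall j, (j <= k)%N -> forall (y : V) (e : R), 0 < e ->
          exists2 d : R, 0 < d & forall y' : V, `|y' - y| < d ->
            forall hs : nat -> V, unit_dirs j hs ->
              `|Dit j f y' hs - Dit j f y hs| <= e) &
      (exists M : R, forall j, (j <= k)%N -> forall (y : V) (hs : nat -> V),
          unit_dirs j hs -> `|Dit j f y hs| <= M)].

Definition homeomorphism (T U : topologicalType) (f : T -> U) : Prop :=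
  exists h : U -> T, [/\ cancel f h, cancel h f, continuous f & continuous h].

(* X = X_c (+) X_u (+) X_s, realised as the product with the max norm *)
Definition blockA (R : realType) (Xc Xu Xs : normedModType R)
  (Ac : Xc -> Xc) (Au : Xu -> Xu) (As : Xs -> Xs) (x : Xc * Xu * Xs)
  : Xc * Xu * Xs := (Ac x.1.1, Au x.1.2, As x.2).

Definition conjK (R : realType) (Xc Xu Xs : normedModType R)
  (kc : Xc -> Xc) (ku : Xc -> Xu) (ks : Xc -> Xs) (x : Xc) : Xc * Xu * Xs :=
  (x + kc x, ku x, ks x).

Definition conj_triple (R : realType) (Xc Xu Xs : normedModType R)
  (Ac : Xc -> Xc) (Au : Xu -> Xu) (As : Xs -> Xs)
  (g : Xc * Xu * Xs -> Xc * Xu * Xs) (kc : Xc -> Xc)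
  (r : Xc -> Xc) (ku : Xc -> Xu) (ks : Xc -> Xs) : Prop :=
  [/\ Cnb 0 ku, Cnb 0 ks, Cnb 0 r,
      homeomorphism (fun x : Xc => Ac x + r x) &
      forall x : Xc,
        blockA Ac Au As (conjK kc ku ks x) + g (conjK kc ku ks x)
        = conjK kc ku ks (Ac x + r x)].

(* Constants; nAc = ||A_c||, nAci = ||A_c^-1||, nAui = ||A_u^-1||, nAs = ||A_s|| *)
Section Constants.
Variables (R : realType) (nAc nAci nAui nAs Lg Lc : R).
Definition cLr : R := (Lg + Lc * (2 * nAc + Lg)) / (1 - Lc).
Definition cLt : R := nAci ^+ 2 * cLr / (1 - nAci * cLr).
Definition cLu : R := nAui * (1 + Lc) * Lg / (1 - cLr * nAui - nAc * nAui).
Definition cLs : R := nAci * (1 + Lc) * Lg / (1 - cLr * nAci - nAs * nAci).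
Definition cLm1 : R := nAci + cLt.
Definition theta1 (m : nat) : R := Lg + Lc.
Definition theta2 (m : nat) : R := nAui * ((nAc + cLr) ^+ m + Lg + cLu).
Definition theta3 (m : nat) : R :=
  cLm1 ^+ m * (nAs * (1 + cLm1 * cLs) + Lg * (1 + cLm1 * (1 + Lc))).
Definition cond_S (N : nat) : Prop :=
  [/\ Lc < 1, cLr * nAci < 1, cLr * nAui + nAc * nAui < 1,
      cLr * nAci + nAs * nAci < 1 &
      forall m, (m <= N)%N -> [/\ theta1 m < 1, theta2 m < 1 & theta3 m < 1]].
End Constants.

From HB Require Import structures.
From mathcomp Require Import all_boot all_order all_algebra.
From mathcomp Require Import all_classical all_reals all_analysis.
From mathcomp Require Import ring lra.
Import Order.TTheory GRing.Theory Num.Theory.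
Import numFieldNormedType.Exports.
Local Open Scope ring_scope.
Local Open Scope classical_set_scope.

(* The derivatives of k_c and k~_c are bounded by L_c < 1, so by the mean
   value inequality both maps are L_c-Lipschitz, and (Banach fixed point)
   x |-> x + k_c x and x |-> x + k~_c x are homeomorphisms of X_c at bounded
   distance from the identity.  Hence h := (id + k~_c)^-1 o (id + k_c) is such
   a homeomorphism too, K~ o h = iota + (k_c, k~_u o h, k~_s o h), and this map
   conjugates F to A_c + r2 with r2 := h^-1 o (A_c + r~) o h - A_c.
   Uniqueness of the conjugacy associated with k_c gives K = K~ o h, so K and
   K~ have the same image. *)

Section normed.
Context {R : realType} {V W : normedModType R}.
Implicit Types (f : V -> W) (M c : R).

Lemma Cnb0P f : Cnb 0 f <-> continuous f /\ exists M, forall y, `|f y| <= M.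
Proof.
have no_dirs (hs : nat -> V) : unit_dirs 0 hs by move=> i; rewrite ltn0.
split=> [[_ fC [M fB]]|[fC [M fB]]].
  split; last by exists M => y; exact: (fB 0%N (leqnn 0) y _ (no_dirs _)).
  move=> y; apply/cvgrPdist_le => e /(fC 0%N (leqnn 0) y)[d d0 fd].
  apply/nbhs_normP; exists d => //= y' yy'.
  by rewrite distrC (fd y' _ _ (no_dirs _)) // distrC.
split=> [j|j|]; first by rewrite ltn0.
- rewrite leqn0 => /eqP-> y e e0 /=.
  have /cvgrPdist_le/(_ e e0)/nbhs_normP[d d0 fd] := fC y.
  by exists d => // y' yy' hs _; rewrite distrC; apply: fd; rewrite /= distrC.
- by exists M => j; rewrite leqn0 => /eqP-> y hs _; exact: fB.
Qed.

Lemma Cnb_differentiable {n f} :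
  (0 < n)%N -> Cnb n f -> forall y, differentiable f y.
Proof. by move=> n0 [fD _ _] y; exact: (fD 0%N n0 (fun=> 0) y). Qed.

Lemma Cnb_bounded {n f} : Cnb n f -> exists M, forall y, `|f y| <= M.
Proof.
case=> _ _ [M fB]; exists M => y.
by apply: (fB 0%N (leq0n n) y (fun=> 0)) => i; rewrite ltn0.
Qed.

Lemma lipschitz_continuous {f c} :
  (forall x y, `|f x - f y| <= c * `|x - y|) -> continuous f.
Proof.
move=> fL x; apply/cvgrPdist_le => e e0.
have c1 : 0 < `|c| + 1 by rewrite ltr_wpDl.
have cc1 : c <= `|c| + 1 by rewrite (le_trans (ler_norm c)) ?lerDl.
near=> y; rewrite (le_trans (fL x y)) // (le_trans (ler_wpM2r _ cc1)) //.
rewrite mulrC -ler_pdivlMr //; near: y.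
apply/nbhs_normP; exists (e / (`|c| + 1)); first exact: divr_gt0.
by move=> y /= /ltW; rewrite distrC.
Unshelve. all: by end_near. Qed.

Lemma linear_le_normM {L : {linear V -> W}} {M} :
  (forall h, `|h| <= 1 -> `|L h| <= M) -> forall h, `|L h| <= M * `|h|.
Proof.
move=> LM h; have [->|h0] := eqVneq h 0; first by rewrite linear0 !normr0 mulr0.
have hpos : 0 < `|h| by rewrite normr_gt0.
rewrite -[h in L h](scalerKV (lt0r_neq0 hpos)) linearZ normrZ normr_id mulrC.
by rewrite ler_wpM2r ?LM // normrZ normfV normr_id mulVf ?gt_eqF.
Qed.

Lemma differentiable_le_near {f p M e} : differentiable f p ->
  (forall h, `|'d f p h| <= M * `|h|) -> 0 < e ->
  exists2 d, 0 < d & forall k, `|k| < d -> `|f (p + k) - f p| <= (M + e) * `|k|.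
Proof.
move=> /diff_locally /eqaddoP fo dM e0.
have /nbhs_normP[d d0 fd] := fo e e0.
exists d => // k kd; have := fd k; rewrite /ball_ /= sub0r normrN => /(_ kd).
rewrite !fctE /= (addrC k) opprD addrA => rem.
rewrite -(subrK ('d f p k) (_ - _)) mulrDl addrC.
by rewrite (le_trans (ler_normD _ _)) // lerD.
Qed.

(* Continuous induction: the supremum of the points where the bound holds is b. *)
Lemma segment_lipschitz_le {phi : R -> W} {c a b} : a <= b ->
  (forall t, exists2 d, 0 < d &
     forall s, `|s - t| < d -> `|phi s - phi t| <= c * `|s - t|) ->
  `|phi b - phi a| <= c * (b - a).
Proof.
move=> ab phi_loc.
pose S := [set t | a <= t <= b /\ `|phi t - phi a| <= c * (t - a)].
have Sa : S a by split; rewrite ?lexx ?ab // !subrr normr0 mulr0.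
have supS : has_sup S by split; [exists a | exists b => t [/andP[_ ?] _]].
set tau := sup S.
have a_tau : a <= tau := sup_upper_bound supS Sa.
have tau_b : tau <= b by apply: ge_sup; [exists a | move=> t [/andP[_ ?] _]].
have [d d0 phid] := phi_loc tau.
have phi_tau : `|phi tau - phi a| <= c * (tau - a).
  have [t St tau_t] := sup_adherent d0 supS.
  have t_tau : t <= tau := sup_upper_bound supS St.
  case: St => _ phit.
  have phi_t_tau : `|phi tau - phi t| <= c * (tau - t).
    rewrite -[tau - t]ger0_norm ?subr_ge0 // distrC (distrC tau) phid //.
    by rewrite distrC ger0_norm ?subr_ge0 //; move: tau_t; rewrite -/tau; lra.
  rewrite (_ : tau - a = (tau - t) + (t - a)); last by ring.
  by rewrite mulrDr (le_trans (ler_distD (phi t) _ _)) ?lerD.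
suff <- : tau = b by [].
apply/eqP; rewrite eq_le tau_b leNgt; apply/negP => tau_lt_b.
have d2 : 0 < d / 2 by rewrite divr_gt0.
set s := Num.min b (tau + d / 2).
have tau_s : tau < s by rewrite lt_min tau_lt_b ltrDl.
have : S s.
  split; first by rewrite ge_min lexx (le_trans a_tau (ltW tau_s)).
  have phi_s_tau : `|phi s - phi tau| <= c * (s - tau).
    have s_tau_d : s - tau < d.
      by rewrite ltrBlDl gt_min ltrD2l ltr_pdivrMr ?ltr_pMr ?ltr1n ?orbT.
    have s_tau0 : 0 <= s - tau by rewrite subr_ge0 ltW.
    by rewrite -[s - tau]ger0_norm // phid // ger0_norm.
  rewrite (_ : s - a = (s - tau) + (tau - a)); last by ring.
  by rewrite mulrDr (le_trans (ler_distD (phi tau) _ _)) ?lerD.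
by move/(sup_upper_bound supS); rewrite leNgt tau_s.
Qed.

Lemma mean_value_le {f M} : (forall y, differentiable f y) ->
  (forall y h, `|h| <= 1 -> `|'d f y h| <= M) ->
  forall x y, `|f x - f y| <= M * `|x - y|.
Proof.
move=> fD dM x y; set v := x - y; pose phi t := f (y + t *: v).
have v1 : 0 < `|v| + 1 by rewrite ltr_wpDl.
apply/ler_addgt0Pr => e e0; set e' := e / (`|v| + 1).
have e'0 : 0 < e' by rewrite divr_gt0.
have e'v : e' * `|v| <= e by rewrite mulrAC ler_pdivrMr // ler_pM2l // lerDl.
have phi_loc t : exists2 d, 0 < d &
    forall s, `|s - t| < d -> `|phi s - phi t| <= (M * `|v| + e) * `|s - t|.
  have [d d0 fd] := differentiable_le_near (fD (y + t *: v))
    (linear_le_normM (dM (y + t *: v))) e'0.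
  exists (d / (`|v| + 1)); first by rewrite divr_gt0.
  move=> s st; rewrite /phi; have -> : y + s *: v = y + t *: v + (s - t) *: v.
    by rewrite -addrA -scalerDl subrKC.
  have stv : `|s - t| * `|v| <= `|s - t| * (`|v| + 1).
    by rewrite ler_wpM2l ?lerDl.
  apply: le_trans (fd _ _) _; rewrite normrZ.
  - by rewrite (le_lt_trans stv) // -ltr_pdivlMr.
  - by rewrite mulrCA [leRHS]mulrC ler_wpM2l // mulrDl lerD2l.
have := segment_lipschitz_le ler01 phi_loc.
by rewrite /phi scale1r scale0r addr0 subr0 mulr1 subrKC.
Qed.
End normed.

Section near_identity.
Context {R : realType}.

Lemma addr_lipschitz_le {X : normedModType R} {k : X -> X} {q : R} :
  (forall x y, `|k x - k y| <= q * `|x - y|) ->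
  forall x y, `|(x + k x) - (y + k y)| <= (1 + q) * `|x - y|.
Proof.
move=> kL x y; rewrite opprD addrACA mulrDl mul1r.
by rewrite (le_trans (ler_normD _ _)) // lerD.
Qed.

Lemma addr_contraction_inv_le {X : normedModType R} {k : X -> X} {q : R} :
  q < 1 ->
  (forall x y, `|k x - k y| <= q * `|x - y|) ->
  forall x y, `|x - y| <= (1 - q)^-1 * `|(x + k x) - (y + k y)|.
Proof.
move=> q1 kL x y; rewrite ler_pdivlMl ?subr_gt0 // mulrBl mul1r lerBlDr.
have xyE : x - y = (x + k x - (y + k y)) + (k y - k x).
  by rewrite opprD [x + k x + _]addrACA -[k y - k x]opprB addrK.
by rewrite [in leLHS]xyE (le_trans (ler_normD _ _)) // lerD2l distrC kL.
Qed.

Lemma addr_contraction_inj {X : normedModType R} {k : X -> X} {q : R} :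
  q < 1 ->
  (forall x y, `|k x - k y| <= q * `|x - y|) -> injective (fun x => x + k x).
Proof.
move=> q1 kL x y /eqP; rewrite -subr_eq0 => /eqP xy.
have := addr_contraction_inv_le q1 kL x y; rewrite xy normr0 mulr0.
by rewrite normr_le0 subr_eq0 => /eqP.
Qed.

Lemma addr_contraction_surj {X : completeNormedModType R} {k : X -> X} {q : R} :
  0 <= q -> q < 1 -> (forall x y, `|k x - k y| <= q * `|x - y|) ->
  forall z, exists y, y + k y = z.
Proof.
move=> q0 q1 kL z.
pose f := totalfun_ setT (fun y : X => z - k y).
have f_contr : is_contraction f.
  exists (NngNum q0); split => //= -[a b] _ /=; rewrite /totalfun_.
  by rewrite opprB addrC addrA subrK distrC kL.
have [p _ fp] := banach_fixed_point f_contr closedT (ex_intro _ z I).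
by exists p; rewrite [X in X + _]fp /f /totalfun_ subrK.
Qed.

Lemma near_identity_reparam {X : completeNormedModType R} {k k' : X -> X}
    {q B B' : R} :
  0 <= q -> q < 1 ->
  (forall x y, `|k x - k y| <= q * `|x - y|) ->
  (forall x y, `|k' x - k' y| <= q * `|x - y|) ->
  (forall x, `|k x| <= B) -> (forall x, `|k' x| <= B') ->
  exists h : X -> X, [/\ forall x, h x + k' (h x) = x + k x,
    continuous h & forall x, `|h x - x| <= B + B'].
Proof.
move=> q0 q1 kL k'L kB k'B.
have [h hE] := choice (fun x => addr_contraction_surj q0 q1 k'L (x + k x)).
have hL x y : `|h x - h y| <= (1 - q)^-1 * (1 + q) * `|x - y|.
  rewrite (le_trans (addr_contraction_inv_le q1 k'L _ _)) // !hE -mulrA.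
  by rewrite ler_wpM2l ?invr_ge0 ?subr_ge0 ?(ltW q1) // (addr_lipschitz_le kL).
exists h; split => // [|x]; first exact: lipschitz_continuous hL.
have -> : h x - x = k x - k' (h x).
  by rewrite -[h x in LHS](addrK (k' (h x))) hE addrAC [x + k x]addrC addrK.
by rewrite (le_trans (ler_normB _ _)) // lerD.
Qed.
End near_identity.

Lemma homeomorphism_conj {T U : topologicalType} (f : U -> U) (h : T -> U)
    (hi : U -> T) :
  homeomorphism f -> cancel h hi -> cancel hi h ->
  continuous h -> continuous hi ->
  homeomorphism (hi \o f \o h).
Proof.
move=> [fi [fK fiK cf cfi]] hK hiK ch chi.
exists (hi \o fi \o h); split=> [x|x|x|x] /=.
- by rewrite hiK fK hK.
- by rewrite hiK fiK hK.
- exact: continuous_comp (ch x) (continuous_comp (cf _) (chi _)).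
- exact: continuous_comp (ch x) (continuous_comp (cfi _) (chi _)).
Qed.

Section conjugacy_reparam.
Context {R : realType} {Xc Xu Xs : normedModType R}.
Context {Ac : {linear Xc -> Xc}} {Au : Xu -> Xu} {As : Xs -> Xs}.
Context {g : Xc * Xu * Xs -> Xc * Xu * Xs}.
Hypothesis cAc : continuous Ac.
Context {kc kc' h hi : Xc -> Xc}.
Hypothesis hE : forall x, h x + kc' (h x) = x + kc x.
Hypotheses (hK : cancel h hi) (hiK : cancel hi h).
Hypotheses (ch : continuous h) (chi : continuous hi).

Lemma conjK_comp {ku' : Xc -> Xu} {ks' : Xc -> Xs} :
  conjK kc (ku' \o h) (ks' \o h) =1 conjK kc' ku' ks' \o h.
Proof. by move=> x; rewrite /conjK /= hE. Qed.

Lemma conj_triple_reparam {r' : Xc -> Xc} {ku' : Xc -> Xu} {ks' : Xc -> Xs}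
    {Bh Bhi : R} :
  (forall x, `|h x - x| <= Bh) -> (forall x, `|hi x - x| <= Bhi) ->
  conj_triple Ac Au As g kc' r' ku' ks' ->
  conj_triple Ac Au As g kc (fun x => hi (Ac (h x) + r' (h x)) - Ac x)
    (ku' \o h) (ks' \o h).
Proof.
move=> hB hiB [/Cnb0P[cku' [Mu ku'B]] /Cnb0P[cks' [Ms ks'B]]].
move=> /Cnb0P[cr' [Mr r'B]] homeo' conj'; pose phi' x := Ac x + r' x.
have cphi' : continuous phi' by move=> x; exact: (continuousD (cAc x) (cr' x)).
have cr2 : continuous (hi \o phi' \o h).
  move=> x; exact: continuous_comp (ch x) (continuous_comp (cphi' _) (chi _)).
have [a a0 AcL] := linear_lipschitz cAc.
split.
- apply/Cnb0P; split; first by move=> x; exact: continuous_comp (ch x) (cku' _).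
  by exists Mu => x; exact: ku'B.
- apply/Cnb0P; split; first by move=> x; exact: continuous_comp (ch x) (cks' _).
  by exists Ms => x; exact: ks'B.
- apply/Cnb0P; split.
    by move=> x; apply: continuousB; [exact: cr2 | exact: cAc].
  exists (Bhi + (a * Bh + Mr)) => x.
  apply: le_trans (ler_distD (phi' (h x)) _ _) _.
  rewrite lerD // /phi' addrAC -linearB (le_trans (ler_normD _ _)) // lerD //.
  by rewrite (le_trans (AcL _)) // ler_wpM2l ?(ltW a0).
- have -> : (fun x => Ac x + (hi (phi' (h x)) - Ac x)) = hi \o phi' \o h.
    by apply: funext => x; rewrite subrKC.
  exact: homeomorphism_conj.
- by move=> x; rewrite !conjK_comp /= conj' subrKC hiK.
Qed.

End conjugacy_reparam.

Theorem proposition6p3 (R : realType) (Xc Xu Xs : completeNormedModType R)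
  (n : nat) (hn : (2 <= n)%N)
  (Ac : {linear Xc -> Xc}) (Au : {linear Xu -> Xu}) (As : {linear Xs -> Xs})
  (Aci : Xc -> Xc) (Aui : Xu -> Xu)
  (cAc : continuous Ac) (cAu : continuous Au) (cAs : continuous As)
  (cAci : continuous Aci) (cAui : continuous Aui)
  (AcK : cancel Ac Aci) (AciK : cancel Aci Ac)
  (AuK : cancel Au Aui) (AuiK : cancel Aui Au)
  (gap_s : forall m, (1 <= m <= n)%N -> opnorm Aci ^+ m * opnorm As < 1)
  (gap_u : forall m, (1 <= m <= n)%N -> opnorm Aui * opnorm Ac ^+ m < 1)
  (Lg Lc : R) (Lg0 : 0 <= Lg) (Lc0 : 0 <= Lc)
  (hS : cond_S (opnorm Ac) (opnorm Aci) (opnorm Aui) (opnorm As) Lg Lc n)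
  (g : Xc * Xu * Xs -> Xc * Xu * Xs) (g_reg : Cnb n g) (g0 : g 0 = 0)
  (dg0 : forall h, 'd g 0 h = 0)
  (dgL : forall y h, `|h| <= 1 -> `|'d g y h| <= Lg)
  (kc kc' : Xc -> Xc)
  (kc_reg : Cnb n kc) (kc0 : kc 0 = 0) (dkc0 : forall h, 'd kc 0 h = 0)
  (dkcL : forall y h, `|h| <= 1 -> `|'d kc y h| <= Lc)
  (kc'_reg : Cnb n kc') (kc'0 : kc' 0 = 0) (dkc'0 : forall h, 'd kc' 0 h = 0)
  (dkc'L : forall y h, `|h| <= 1 -> `|'d kc' y h| <= Lc)
  (r : Xc -> Xc) (ku : Xc -> Xu) (ks : Xc -> Xs)
  (hK : conj_triple Ac Au As g kc r ku ks)
  (hKuniq : forall r2 ku2 ks2, conj_triple Ac Au As g kc r2 ku2 ks2 ->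
              [/\ r2 = r, ku2 = ku & ks2 = ks])
  (r' : Xc -> Xc) (ku' : Xc -> Xu) (ks' : Xc -> Xs)
  (hK' : conj_triple Ac Au As g kc' r' ku' ks')
  (hK'uniq : forall r2 ku2 ks2, conj_triple Ac Au As g kc' r2 ku2 ks2 ->
              [/\ r2 = r', ku2 = ku' & ks2 = ks']) :
  range (conjK kc ku ks) = range (conjK kc' ku' ks').
Proof.
have [Lc1 _ _ _ _] := hS.
have n0 : (0 < n)%N by apply: leq_trans hn.
have kcL := mean_value_le (Cnb_differentiable n0 kc_reg) dkcL.
have kc'L := mean_value_le (Cnb_differentiable n0 kc'_reg) dkc'L.
have [[B kcB] [B' kc'B]] := (Cnb_bounded kc_reg, Cnb_bounded kc'_reg).
have [h [hE ch hB]] := near_identity_reparam Lc0 Lc1 kcL kc'L kcB kc'B.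
have [hi [hiE chi hiB]] := near_identity_reparam Lc0 Lc1 kc'L kcL kc'B kcB.
have hhiK : cancel h hi.
  by move=> x; apply: (addr_contraction_inj Lc1 kcL); rewrite /= hiE hE.
have hihK : cancel hi h.
  by move=> x; apply: (addr_contraction_inj Lc1 kc'L); rewrite /= hE hiE.
have := conj_triple_reparam cAc hE hhiK hihK ch chi hB hiB hK'.
move=> /hKuniq[_ <- <-].
apply/seteqP; split => _ [x _ <-].
- by exists (h x); rewrite // (conjK_comp hE).
- by exists (hi x); rewrite // (conjK_comp hE) /= hihK.
Qed.
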